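(* Let $G$ be a finite group of order greater than $1$ and let $q$ be the smallest prime divisor of $|G|$. Then ${\rm mf}_{pp}(G)\leq q$ if and only if $\mathcal{F}_{pp}(G)=\{1\}$ or $\mathcal{F}_{pp}(G)=\{1,q\}$.
   Context: All groups are finite. For a group $G$ and a positive integer $n$ dividing $|G|$, let $F_n(G)=\{g\in G\mid g^n=1\}$. By Frobenius' theorem $|F_n(G)|=f_n\cdot n$ for a positive integer $f_n$, called the Frobenius quotient of $G$ for $n$. ${\rm exp}(G)$ denotes the exponent of $G$. A prime-power divisor of ${\rm exp}(G)$ is a positive divisor $n$ of ${\rm exp}(G)$ of the form $n=p^k$ with $p$ prime and $k\geq 0$ (so $n=1$ is included). $\mathcal{F}_{pp}(G)=\{f_n\mid n \text{ is a prime-power divisor of } {\rm exp}(G)\}$ and ${\rm mf}_{pp}(G)$ is the maximum element of $\mathcal{F}_{pp}(G)$. *)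

From mathcomp Require Import all_boot all_fingroup all_solvable.
Set Implicit Arguments. Unset Strict Implicit. Unset Printing Implicit Defensive.
Open Scope group_scope.

Definition Fset (gT : finGroupType) (G : {group gT}) (n : nat) : {set gT} :=
  [set g in G | g ^+ n == 1].

(* Frobenius quotient f_n = |F_n(G)| / n (exact division when n divides |G|,
   by Frobenius' theorem). *)
Definition frob (gT : finGroupType) (G : {group gT}) (n : nat) : nat :=
  #|Fset G n| %/ n.

Definition is_ppow (n : nat) : bool :=
  (n == 1%N) || [exists p : 'I_n.+1, prime p && (n == p ^ logn p n)%N].

Definition ppdivs (gT : finGroupType) (G : {group gT}) : seq nat :=
  [seq n <- divisors (exponent G) | is_ppow n].

(* F_pp(G) as a finite list of values (membership = the set) *)
Definition Fpp (gT : finGroupType) (G : {group gT}) : seq nat :=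
  [seq frob G n | n <- ppdivs G].

Definition mfpp (gT : finGroupType) (G : {group gT}) : nat :=
  \max_(n <- ppdivs G) frob G n.

(* Let n = p^k divide |G|.  The elements x <> 1 with x^n = 1 are partitioned
   according to the cyclic subgroup they generate, a class of order p^j having
   phi(p^j) = p^(j-1)(p - 1) elements; so |F_n(G)| = f_n n = 1 modulo p - 1,
   and since n = 1 modulo p - 1 also f_n = 1 modulo p - 1.  As q <= p, a value
   0 < f_n < q lies in [1, p - 1] and must be 1.  Thus F_pp(G) contains f_1 = 1
   and no value strictly between 1 and q, and for such a set of integers
   max <= q holds exactly when it is {1} or {1, q}. *)

From mathcomp Require Import all_boot all_fingroup all_solvable.

Set Implicit Arguments.
Unset Strict Implicit.
Unset Printing Implicit Defensive.

Local Open Scope nat_scope.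

Lemma eq1_mod_small m f : 0 < f <= m -> f = 1 %[mod m] -> f = 1.
Proof.
case/andP=> f_gt0; rewrite leq_eqVlt => /predU1P[-> | lt_fm].
  by rewrite modnn; case: m {f_gt0} => [|[|m]] //; rewrite modn_small.
by rewrite modn_small // => ->; rewrite modn_small // (leq_ltn_trans f_gt0).
Qed.

Lemma bigmax_leq_gap (s : seq nat) q : 0 < q -> 1 \in s ->
    {in s, forall x, x = 1 \/ q <= x} ->
  \max_(x <- s) x <= q <-> s =i [:: 1] \/ s =i [:: 1; q].
Proof.
move=> q_gt0 s1 gap_s; split=> [/bigmax_leqP_seq le_s_q | s_1q].
  have mem_s x : x \in s -> x = 1 \/ x = q.
    move=> sx; have [-> | le_qx] := gap_s x sx; [by left | right].
    by apply/eqP; rewrite eqn_leq le_s_q.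
  have [sq | s'q] := boolP (q \in s); [right | left] => x; rewrite !inE.
    apply/idP/orP => [/mem_s[] -> | [] /eqP-> //]; rewrite eqxx; by [left | right].
  apply/idP/eqP => [sx | -> //]; have [//| xq] := mem_s x sx.
  by rewrite -xq sx in s'q.
apply/bigmax_leqP_seq => x + _.
by case: s_1q => ->; rewrite !inE; [move/eqP-> | case/orP=> /eqP->].
Qed.

Section FrobeniusQuotients.

Variables (gT : finGroupType) (G : {group gT}).

Lemma Fset_Ldiv n : Fset G n = 'Ldiv_n(G).
Proof. by apply/setP=> x; rewrite !inE. Qed.

Lemma Ldiv1 n : 1%g \in 'Ldiv_n(G).
Proof. by rewrite !inE group1 expg1n eqxx. Qed.

Lemma frob1 : frob G 1 = 1.
Proof.
rewrite /frob divn1 Fset_Ldiv -[RHS](cards1 (1%g : gT)); apply: eq_card => x.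
by rewrite !inE expg1 andb_idl // => /eqP->.
Qed.

Lemma predn_dvd_card_Ldiv_pfactorD1 p k :
  prime p -> p.-1 %| #|'Ldiv_(p ^ k)(G) :\ 1%g|.
Proof.
move=> p_pr; set A := _ :\ _.
rewrite -sum1_card (partition_big_imset (@cycle _)) /=.
apply: dvdn_sum => _ /imsetP[x Ax ->].
rewrite (eq_bigl (generator <[x]>)) => [|y].
  rewrite sum1dep_card -totient_gen.
  move: Ax; rewrite !inE => /andP[nx1 /andP[Gx]].
  rewrite -order_dvdn => /(dvdn_pfactor _ _ p_pr)[[|j] _ oj].
    by rewrite -order_eq1 oj in nx1.
  by rewrite oj totient_pfactor // dvdn_mulr.
rewrite /generator eq_sym andbC; case xy: {+}(_ == _) => //.
have eq_o : #[y] = #[x] by rewrite /order (eqP xy).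
move: Ax; rewrite !inE -!order_dvdn -!order_eq1 eq_o => /andP[-> /andP[Gx ->]].
by rewrite -cycle_subG -(eqP xy) cycle_subG Gx.
Qed.

Lemma frob_pfactor_modn p k :
  prime p -> p ^ k %| #|G| -> frob G (p ^ k) = 1 %[mod p.-1].
Proof.
move=> p_pr dvd_pk_G.
have p_mod : p = 1 %[mod p.-1].
  by rewrite -{1}(prednK (prime_gt0 p_pr)) -addn1 modnDl.
have pk_mod : p ^ k = 1 %[mod p.-1] by rewrite -modnXm p_mod modnXm exp1n.
have [m card_D1] := dvdnP (predn_dvd_card_Ldiv_pfactorD1 k p_pr).
rewrite -(muln1 (frob G _)) -modnMm -pk_mod modnMm /frob Fset_Ldiv.
by rewrite divnK ?Frobenius_Ldiv // (cardsD1 1%g) Ldiv1 card_D1 addnC modnMDl.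
Qed.

Lemma frob_gt0 n : n %| #|G| -> 0 < frob G n.
Proof.
move=> dvd_n_G; rewrite /frob Fset_Ldiv divn_gt0 ?(dvdn_gt0 _ dvd_n_G) //.
by rewrite dvdn_leq ?Frobenius_Ldiv // (cardsD1 1%g) Ldiv1.
Qed.

Lemma frob_pfactor_eq1_or_ge_pdiv p k : prime p -> 0 < k -> p ^ k %| #|G| ->
  frob G (p ^ k) = 1 \/ pdiv #|G| <= frob G (p ^ k).
Proof.
move=> p_pr k_gt0 dvd_pk_G.
have [lt_f_q | ] := ltnP (frob G (p ^ k)) (pdiv #|G|); [left | by right].
apply: eq1_mod_small (frob_pfactor_modn p_pr dvd_pk_G).
rewrite frob_gt0 //= -ltnS prednK ?prime_gt0 // (leq_trans lt_f_q) //.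
apply: pdiv_min_dvd (prime_gt1 p_pr) _.
exact: dvdn_trans (dvdn_exp k_gt0 (dvdnn p)) dvd_pk_G.
Qed.

Lemma one_in_ppdivs : 1 \in ppdivs G.
Proof. by rewrite mem_filter /is_ppow eqxx -dvdn_divisors ?exponent_gt0 ?dvd1n. Qed.

Lemma frob_ppdivs n :
  n \in ppdivs G -> frob G n = 1 \/ pdiv #|G| <= frob G n.
Proof.
rewrite mem_filter -dvdn_divisors ?exponent_gt0 // => /andP[n_ppow dvd_n_exp].
have [-> | n_neq1] := eqVneq n 1; first by left; exact: frob1.
move: n_ppow; rewrite /is_ppow (negPf n_neq1) => /existsP[[p _] /= /andP[p_pr]].
set k := logn p n => /eqP n_pk; rewrite n_pk.
apply: frob_pfactor_eq1_or_ge_pdiv => //.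
  by rewrite lt0n; apply: contra_neq n_neq1; rewrite n_pk => ->.
by rewrite -n_pk (dvdn_trans dvd_n_exp) ?exponent_dvdn.
Qed.

End FrobeniusQuotients.

Theorem corollary1p2 (gT : finGroupType) (G : {group gT}) :
  (1 < #|G|)%N ->
  let q := pdiv #|G| in
  (mfpp G <= q)%N <->
  (Fpp G =i [:: 1%N] \/ Fpp G =i [:: 1%N; q]).
Proof.
move=> _ q.
have -> : mfpp G = \max_(f <- Fpp G) f by rewrite big_map.
apply: bigmax_leq_gap; first exact: pdiv_gt0.
  by rewrite -(frob1 G) map_f ?one_in_ppdivs.
by move=> _ /mapP[n n_pp ->]; exact: frob_ppdivs.
Qed.
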